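(* Let $c>0$ and $0<\varepsilon\le\delta<c/100$, and let $z\in\mathbb C$ satisfy $|\operatorname{Re}z|\ge c/\varepsilon$ and $|\operatorname{Im}z|\le\frac12$. Then for every integer $n\ge0$, $$\bigl|\ell^{(n)}_{c,\varepsilon}(z)\bigr|\le n!\,\frac{c\,e^{1.56\sqrt{\delta c}}}{\sinh c}\Bigl(\frac{2\varepsilon}{\delta}\Bigr)^n.$$
   Context: $\ell_c(x)=\frac{c}{\sinh c}\frac{\sin\sqrt{x^2-c^2}}{\sqrt{x^2-c^2}}$ is the Logan function, an entire function of $x\in\mathbb C$ (independent of the choice of square root), and $\ell_{c,\varepsilon}(x)=\ell_c(\varepsilon x)$; $\ell^{(n)}_{c,\varepsilon}$ denotes its $n$-th derivative. *)

From Stdlib Require Import Reals Lra.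
Open Scope R_scope.

Record Cplx := mkC { re : R; im : R }.

Definition RtoC (a : R) : Cplx := mkC a 0.
Definition Cadd (z w : Cplx) : Cplx := mkC (re z + re w) (im z + im w).
Definition Copp (z : Cplx) : Cplx := mkC (- re z) (- im z).
Definition Csub (z w : Cplx) : Cplx := Cadd z (Copp w).
Definition Cmul (z w : Cplx) : Cplx :=
  mkC (re z * re w - im z * im w) (re z * im w + im z * re w).
Definition Cinv (z : Cplx) : Cplx :=
  mkC (re z / (re z ^ 2 + im z ^ 2)) (- im z / (re z ^ 2 + im z ^ 2)).
Definition Cdiv (z w : Cplx) : Cplx := Cmul z (Cinv w).
Definition Cabs (z : Cplx) : R := sqrt (re z ^ 2 + im z ^ 2).

(* complex sine: sin(a+ib) = sin a cosh b + i cos a sinh b *)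
Definition Csin (z : Cplx) : Cplx :=
  mkC (sin (re z) * cosh (im z)) (cos (re z) * sinh (im z)).

(* principal complex square root (any square root would do, see below) *)
Definition Csqrt (z : Cplx) : Cplx :=
  mkC (sqrt ((Cabs z + re z) / 2))
      ((if Rlt_dec (im z) 0 then -1 else 1) * sqrt ((Cabs z - re z) / 2)).

Definition Csinc (w : Cplx) : Cplx :=
  if Req_EM_T (re w) 0 then
    (if Req_EM_T (im w) 0 then RtoC 1 else Cdiv (Csin w) w)
  else Cdiv (Csin w) w.

Definition logan (c : R) (x : Cplx) : Cplx :=
  Cmul (RtoC (c / sinh c))
       (Csinc (Csqrt (Csub (Cmul x x) (RtoC (c * c))))).

Definition logan_eps (c eps : R) (x : Cplx) : Cplx := logan c (Cmul (RtoC eps) x).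

Definition is_Cderiv (f g : Cplx -> Cplx) : Prop :=
  forall z : Cplx, forall e : R, 0 < e -> exists d : R, 0 < d /\
    forall h : Cplx, h <> RtoC 0 -> Cabs h < d ->
      Cabs (Csub (Cdiv (Csub (f (Cadd z h)) (f z)) h) (g z)) < e.

(* Cauchy's estimate on the circle of radius [r = delta / (2 eps)] around [z]: integrating by
   parts [n] times against [e^{-inθ}] gives
     [∫ g(z + r e^{iθ}) e^{-inθ} dθ = r^n / n! ∫ g^(n)(z + r e^{iθ}) dθ],
   and the last integral is [2π g^(n)(z)] by the mean value property, itself proved by noting
   that its derivative in the radius is the integral of an exact derivative in [θ].  On that
   circle [eps w] stays in the region [|Re| >= c - delta/2], [|Im| <= delta], where
   [|sin s / s| <= exp |Im s|] and [|Im sqrt(w^2 - c^2)| <= 1.56 sqrt(delta c)], hence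
   [|l_c(eps w)| <= c e^{1.56 sqrt(delta c)} / sinh c]. *)

From Pilot Require Import Defs.
From Stdlib Require Import Reals Arith Lra Lia.
From Coquelicot Require Import Coquelicot.
Open Scope R_scope.

(** * Complex-valued functions of a real variable *)

Lemma norm_C_R (z : C) : norm (K := R_AbsRing) (V := C_R_NormedModule) z = Cmod z.
Proof.
  destruct z as [a b]. unfold norm; simpl. unfold prod_norm, Cmod; simpl.
  change (norm a) with (Rabs a); change (norm b) with (Rabs b).
  rewrite !Rmult_1_r, <- !Rabs_mult, !Rabs_right; try nra; reflexivity.
Qed.

Lemma is_derive_C_fst (f : R -> C) x l :
  is_derive f x l -> is_derive (fun t => fst (f t)) x (fst l).
Proof.
  intros Hf. exact (filterdiff_comp' f fst x _ _ Hf (filterdiff_linear _ is_linear_fst)).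
Qed.

Lemma is_derive_C_snd (f : R -> C) x l :
  is_derive f x l -> is_derive (fun t => snd (f t)) x (snd l).
Proof.
  intros Hf. exact (filterdiff_comp' f snd x _ _ Hf (filterdiff_linear _ is_linear_snd)).
Qed.

Lemma is_derive_C_pair (f : R -> C) x l :
  is_derive (fun t => fst (f t)) x (fst l) -> is_derive (fun t => snd (f t)) x (snd l) ->
  is_derive f x l.
Proof.
  intros H1 H2.
  apply (filterdiff_ext (fun t => (fst (f t), snd (f t)))).
  { intros t; now destruct (f t). }
  apply (filterdiff_ext_lin _ (fun y : R => (scal y (fst l), scal y (snd l)))).
  2:{ intros y; now destruct l. }
  apply (filterdiff_comp'_2 (fun t => fst (f t)) (fun t => snd (f t)) pair x _ _ pair H1 H2).
  apply (filterdiff_ext_lin _ (fun t => t)); [|now intros []].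
  apply (filterdiff_ext (fun t => t)); [now intros []|].
  apply filterdiff_id.
Qed.

Lemma is_derive_C_const (c : C) x : is_derive (fun _ : R => c) x (RtoC 0).
Proof. apply (is_derive_const (V := C_R_NormedModule)). Qed.

Lemma is_derive_Cplus (f g : R -> C) x lf lg :
  is_derive f x lf -> is_derive g x lg -> is_derive (fun t => f t + g t)%C x (lf + lg)%C.
Proof. apply (is_derive_plus (V := C_R_NormedModule)). Qed.

Lemma is_derive_Rmult (f g : R -> R) x lf lg :
  is_derive f x lf -> is_derive g x lg ->
  is_derive (fun t => f t * g t) x (lf * g x + f x * lg).
Proof. intros Hf Hg. apply (is_derive_mult f g x lf lg Hf Hg Rmult_comm). Qed.

Lemma is_derive_Cmult (f g : R -> C) x lf lg :
  is_derive f x lf -> is_derive g x lg ->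
  is_derive (fun t => f t * g t)%C x (lf * g x + f x * lg)%C.
Proof.
  intros Hf Hg.
  pose proof (is_derive_C_fst _ _ _ Hf) as Hf1. pose proof (is_derive_C_snd _ _ _ Hf) as Hf2.
  pose proof (is_derive_C_fst _ _ _ Hg) as Hg1. pose proof (is_derive_C_snd _ _ _ Hg) as Hg2.
  pose proof (is_derive_Rmult _ _ _ _ _ Hf1 Hg1) as F1.
  pose proof (is_derive_Rmult _ _ _ _ _ Hf1 Hg2) as F2.
  pose proof (is_derive_Rmult _ _ _ _ _ Hf2 Hg1) as F3.
  pose proof (is_derive_Rmult _ _ _ _ _ Hf2 Hg2) as F4.
  apply is_derive_C_pair; cbn.
  - replace (_ + _) with (minus (fst lf * fst (g x) + fst (f x) * fst lg)
                                (snd lf * snd (g x) + snd (f x) * snd lg)).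
    + exact (is_derive_minus _ _ _ _ _ F1 F4).
    + unfold minus, plus, opp; simpl; ring.
  - replace (_ + _) with (plus (fst lf * snd (g x) + fst (f x) * snd lg)
                               (snd lf * fst (g x) + snd (f x) * fst lg)).
    + exact (is_derive_plus _ _ _ _ _ F2 F3).
    + unfold plus; simpl; ring.
Qed.

Lemma is_derive_continuous_C (F : R -> C) x l : is_derive F x l -> continuous F x.
Proof. intros H. apply (ex_derive_continuous (V := C_R_NormedModule)). now exists l. Qed.

Lemma continuous_C_pair {U : UniformSpace} (f : U -> C) x :
  continuous (fun y => fst (f y)) x -> continuous (fun y => snd (f y)) x -> continuous f x.
Proof.
  intros H1 H2.
  apply (continuous_ext (fun y => (fst (f y), snd (f y)))); [intros y; now destruct (f y)|].
  apply (continuous_comp_2 _ _ pair x H1 H2).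
  apply (continuous_ext (fun z => z)); [now intros []|]. apply continuous_id.
Qed.

Lemma continuous_C_fst {U : UniformSpace} (f : U -> C) x :
  continuous f x -> continuous (fun y => fst (f y)) x.
Proof.
  intros H. apply (continuous_comp f fst); [exact H|]. destruct (f x). apply continuous_fst.
Qed.

Lemma continuous_C_snd {U : UniformSpace} (f : U -> C) x :
  continuous f x -> continuous (fun y => snd (f y)) x.
Proof.
  intros H. apply (continuous_comp f snd); [exact H|]. destruct (f x). apply continuous_snd.
Qed.

Lemma continuous_Cmult {U : UniformSpace} (f g : U -> C) x :
  continuous f x -> continuous g x -> continuous (fun y => f y * g y)%C x.
Proof.
  intros Hf Hg.
  pose proof (continuous_C_fst _ _ Hf). pose proof (continuous_C_snd _ _ Hf).
  pose proof (continuous_C_fst _ _ Hg). pose proof (continuous_C_snd _ _ Hg).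
  apply continuous_C_pair; cbn.
  - apply (continuous_minus (fun y => fst (f y) * fst (g y)) (fun y => snd (f y) * snd (g y)));
      apply (continuous_mult (K := R_AbsRing)); assumption.
  - apply (continuous_plus (fun y => fst (f y) * snd (g y)) (fun y => snd (f y) * fst (g y)));
      apply (continuous_mult (K := R_AbsRing)); assumption.
Qed.

(* [C] is canonically a normed module over itself; integrals in [θ] need its real structure. *)
Notation RInt_C := (@RInt C_R_CompleteNormedModule).
Notation ex_RInt_C := (@ex_RInt C_R_NormedModule).

Lemma RInt_C_fst (f : R -> C) a b :
  ex_RInt_C f a b -> fst (RInt_C f a b) = RInt (fun t => fst (f t)) a b.
Proof.
  intros Hf. symmetry. apply is_RInt_unique.
  apply (is_RInt_fct_extend_fst (U := R_NormedModule) (V := R_NormedModule)).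
  exact (RInt_correct (V := C_R_CompleteNormedModule) f a b Hf).
Qed.

Lemma RInt_C_snd (f : R -> C) a b :
  ex_RInt_C f a b -> snd (RInt_C f a b) = RInt (fun t => snd (f t)) a b.
Proof.
  intros Hf. symmetry. apply is_RInt_unique.
  apply (is_RInt_fct_extend_snd (U := R_NormedModule) (V := R_NormedModule)).
  exact (RInt_correct (V := C_R_CompleteNormedModule) f a b Hf).
Qed.

Lemma ex_RInt_C_continuous (f : R -> C) a b :
  (forall t, continuous f t) -> ex_RInt_C f a b.
Proof. intros Hf. apply (ex_RInt_continuous (V := C_R_CompleteNormedModule)). auto. Qed.

Section RIntParam.

Variables (f df : R -> R -> C) (a b : R).
Hypothesis Hdf : forall u t, is_derive (fun u => f u t) u (df u t).
Hypothesis Hdf_cont : forall u t, continuous (fun z : R * R => df (fst z) (snd z)) (u, t).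
Hypothesis Hf_cont : forall u t, continuous (f u) t.

Lemma is_derive_RInt_param_C x :
  is_derive (fun u => RInt_C (fun t => f u t) a b) x (RInt_C (fun t => df x t) a b).
Proof.
  assert (Hdfx : ex_RInt_C (df x) a b).
  { apply ex_RInt_C_continuous. intros t.
    apply (continuous_comp_2 (fun _ : R => x) (fun s => s) df); auto.
    - apply continuous_const.
    - apply continuous_id. }
  assert (Hfu : forall u, ex_RInt_C (f u) a b) by (intros u; apply ex_RInt_C_continuous; auto).
  apply is_derive_C_pair.
  - rewrite RInt_C_fst by exact Hdfx.
    apply (is_derive_ext (fun u => RInt (fun t => fst (f u t)) a b)).
    { intros u. now rewrite RInt_C_fst. }
    rewrite (RInt_ext _ (fun t => Derive (fun u => fst (f u t)) x)).
    2:{ intros t _. symmetry. apply is_derive_unique, is_derive_C_fst, Hdf. }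
    apply is_derive_RInt_param.
    + apply filter_forall. intros y t _. eexists. apply is_derive_C_fst, Hdf.
    + intros t _.
      apply (continuity_2d_pt_ext (fun u v => fst (df u v))).
      { intros u v. symmetry. apply is_derive_unique, is_derive_C_fst, Hdf. }
      apply continuity_2d_pt_filterlim, (continuous_C_fst (fun z : R * R => df (fst z) (snd z))).
      apply Hdf_cont.
    + apply filter_forall. intros y. apply ex_RInt_fct_extend_fst, Hfu.
  - rewrite RInt_C_snd by exact Hdfx.
    apply (is_derive_ext (fun u => RInt (fun t => snd (f u t)) a b)).
    { intros u. now rewrite RInt_C_snd. }
    rewrite (RInt_ext _ (fun t => Derive (fun u => snd (f u t)) x)).
    2:{ intros t _. symmetry. apply is_derive_unique, is_derive_C_snd, Hdf. }
    apply is_derive_RInt_param.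
    + apply filter_forall. intros y t _. eexists. apply is_derive_C_snd, Hdf.
    + intros t _.
      apply (continuity_2d_pt_ext (fun u v => snd (df u v))).
      { intros u v. symmetry. apply is_derive_unique, is_derive_C_snd, Hdf. }
      apply continuity_2d_pt_filterlim, (continuous_C_snd (fun z : R * R => df (fst z) (snd z))).
      apply Hdf_cont.
    + apply filter_forall. intros y. apply ex_RInt_fct_extend_snd, Hfu.
Qed.

End RIntParam.

Lemma RInt_C_derive_periodic (F dF : R -> C) T :
  (forall t, is_derive F t (dF t)) -> (forall t, continuous dF t) -> F T = F 0 ->
  RInt_C dF 0 T = RtoC 0.
Proof.
  intros HF HdF HT. apply is_RInt_unique.
  replace (RtoC 0) with (minus (F T) (F 0)).
  - apply (is_RInt_derive (V := C_R_CompleteNormedModule)); auto.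
  - rewrite HT. apply (minus_eq_zero (G := C_R_NormedModule)).
Qed.

Lemma is_derive_zero_const {V : NormedModule R_AbsRing} (F : R -> V) :
  (forall u, is_derive F u zero) -> forall r s, F r = F s.
Proof.
  intros HF r s. destruct (Rtotal_order r s) as [Hrs | [-> | Hrs]]; [| reflexivity |].
  - apply eq_is_derive; auto.
  - symmetry. apply eq_is_derive; auto.
Qed.

(** * Holomorphic functions and Cauchy's estimate *)

(* Complex differentiability of [g] with derivative [g'], phrased as real Fréchet
   differentiability whose differential at [w] is multiplication by [g' w]: in this form it
   composes with real curves through Coquelicot's chain rule. *)
Definition has_C_derive (g g' : C -> C) : Prop :=
  forall w : C, filterdiff (K := R_AbsRing) (U := C_R_NormedModule) (V := C_R_NormedModule)
    g (locally w) (fun h => h * g' w)%C.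

Lemma is_linear_Cmult_r (l : C) :
  is_linear (K := R_AbsRing) (U := C_R_NormedModule) (V := C_R_NormedModule) (fun h => h * l)%C.
Proof.
  split.
  - intros x y. change (plus x y * l = plus (x * l) (y * l))%C. change plus with Cplus. ring.
  - intros k x. change (@eq C (scal k x * l)%C (scal k (x * l)%C)).
    rewrite !scal_R_Cmult. ring.
  - exists (Cmod l + 1). split; [pose proof (Cmod_ge_0 l); lra|].
    intros x. rewrite !norm_C_R, Cmod_mult. pose proof (Cmod_ge_0 x). nra.
Qed.

Section Holomorphic.

Variables g g' : C -> C.
Hypothesis Hg : has_C_derive g g'.

Lemma has_C_derive_continuous w : continuous g w.
Proof.
  apply (filterdiff_continuous (K := R_AbsRing) (U := C_R_NormedModule) (V := C_R_NormedModule)).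
  eexists. apply Hg.
Qed.

Lemma is_derive_has_C_derive_comp (γ : R -> C) t dγ :
  is_derive γ t dγ -> is_derive (fun s => g (γ s)) t (g' (γ t) * dγ)%C.
Proof.
  intros Hγ. unfold is_derive.
  apply (filterdiff_ext_lin _ (fun y : R => (scal y dγ * g' (γ t))%C)).
  - exact (filterdiff_comp' γ g t _ _ Hγ (Hg (γ t))).
  - intros y. change (@eq C (scal y dγ * g' (γ t))%C (scal y (g' (γ t) * dγ))%C).
    rewrite !scal_R_Cmult. ring.
Qed.

End Holomorphic.

Definition expi (θ : R) : C := (cos θ, sin θ).

Lemma is_derive_expi θ : is_derive expi θ (Ci * expi θ)%C.
Proof.
  apply is_derive_C_pair; simpl.
  - auto_derive; auto. ring.
  - auto_derive; auto. ring.
Qed.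

Lemma continuous_expi θ : continuous expi θ.
Proof. exact (is_derive_continuous_C _ _ _ (is_derive_expi θ)). Qed.

Lemma expi_add θ φ : (expi θ * expi φ)%C = expi (θ + φ).
Proof. unfold expi. rewrite cos_plus, sin_plus. apply injective_projections; simpl; ring. Qed.

Lemma expi_0 : expi 0 = 1%C.
Proof. unfold expi. now rewrite cos_0, sin_0. Qed.

Lemma Cmod_expi θ : Cmod (expi θ) = 1.
Proof.
  unfold expi, Cmod; simpl. rewrite <- sqrt_1 at 3. f_equal.
  pose proof (sin2_cos2 θ) as H. unfold Rsqr in H. lra.
Qed.

Definition circle (p : C) (r θ : R) : C := (p + r * expi θ)%C.

Lemma circle_0 p θ : circle p 0 θ = p.
Proof. unfold circle. ring. Qed.

Lemma circle_2PI p r : circle p r (2 * PI) = circle p r 0.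
Proof. unfold circle, expi. now rewrite cos_2PI, sin_2PI, cos_0, sin_0. Qed.

Lemma is_derive_circle_angle p r θ :
  is_derive (circle p r) θ (Ci * r * expi θ)%C.
Proof.
  replace (Ci * r * expi θ)%C with (0 + (0 * expi θ + r * (Ci * expi θ)))%C by ring.
  apply (is_derive_Cplus (fun _ => p) (fun t => r * expi t)%C); [apply is_derive_C_const|].
  apply (is_derive_Cmult (fun _ => RtoC r)); [apply is_derive_C_const | apply is_derive_expi].
Qed.

Lemma is_derive_circle_radius p r θ :
  is_derive (fun u => circle p u θ) r (expi θ).
Proof.
  replace (expi θ) with (0 + (1 * expi θ + r * 0))%C by ring.
  apply (is_derive_Cplus (fun _ => p) (fun u => u * expi θ)%C); [apply is_derive_C_const|].
  apply (is_derive_Cmult RtoC (fun _ => expi θ)); [|apply is_derive_C_const].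
  apply is_derive_C_pair; simpl; auto_derive; auto.
Qed.

Lemma continuous_circle p (z : R * R) :
  continuous (fun z : R * R => circle p (fst z) (snd z)) z.
Proof.
  destruct z as [u θ]. unfold circle.
  apply (continuous_plus (V := C_R_NormedModule) (fun _ => p)); [apply continuous_const|].
  apply continuous_Cmult.
  - apply continuous_C_pair; simpl; [apply continuous_fst | apply continuous_const].
  - apply (continuous_comp snd expi); [apply continuous_snd | apply continuous_expi].
Qed.

Lemma is_derive_circle_angle_comp (p : C) (h h' : C -> C) r θ :
  has_C_derive h h' ->
  is_derive (fun t => h (circle p r t)) θ (h' (circle p r θ) * (Ci * r * expi θ))%C.
Proof. intros Hh. apply (is_derive_has_C_derive_comp h h' Hh), is_derive_circle_angle. Qed.

Lemma continuous_circle_angle_comp (p : C) (h h' : C -> C) r θ :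
  has_C_derive h h' -> continuous (fun t => h (circle p r t)) θ.
Proof. intros Hh. eapply is_derive_continuous_C, is_derive_circle_angle_comp, Hh. Qed.

Section MeanValue.

Variables g g' g'' : C -> C.
Hypothesis Hg : has_C_derive g g'.
Hypothesis Hg' : has_C_derive g' g''.
Variable p : C.

Lemma is_derive_RInt_circle r :
  is_derive (fun u => RInt_C (fun θ => g (circle p u θ)) 0 (2 * PI)) r
    (RInt_C (fun θ => g' (circle p r θ) * expi θ)%C 0 (2 * PI)).
Proof.
  apply (is_derive_RInt_param_C (fun u θ => g (circle p u θ))
                                (fun u θ => g' (circle p u θ) * expi θ)%C).
  - intros u θ.
    apply (is_derive_has_C_derive_comp g g' Hg (fun u => circle p u θ)), is_derive_circle_radius.
  - intros u θ.
    apply (continuous_Cmult (fun z : R * R => g' (circle p (fst z) (snd z)))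
                            (fun z : R * R => expi (snd z))).
    + apply (continuous_comp (fun z : R * R => circle p (fst z) (snd z)) g').
      * apply continuous_circle.
      * apply (has_C_derive_continuous g' g'' Hg').
    + apply (continuous_comp snd expi); [apply continuous_snd | apply continuous_expi].
  - intros u θ. apply (continuous_circle_angle_comp p g g' u θ Hg).
Qed.

(* The integrand is the [θ]-derivative of [-i g (circle p r θ) / r], or of [-i g' p e^{iθ}]
   when [r = 0]. *)
Lemma RInt_circle_derivative_zero r :
  RInt_C (fun θ => g' (circle p r θ) * expi θ)%C 0 (2 * PI) = RtoC 0.
Proof.
  assert (Hcont : forall θ, continuous (fun θ => g' (circle p r θ) * expi θ)%C θ).
  { intros θ. apply (continuous_Cmult (fun θ => g' (circle p r θ)));
      [apply (continuous_circle_angle_comp p g' g'' r θ Hg') | apply continuous_expi]. }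
  destruct (Req_dec r 0) as [-> | Hr].
  - apply (RInt_C_derive_periodic (fun θ => g' p * (- Ci * expi θ)))%C; auto.
    + intros θ. rewrite circle_0.
      replace (g' p * expi θ)%C
        with (0 * (- Ci * expi θ) + g' p * (0 * expi θ + - Ci * (Ci * expi θ)))%C.
      * apply (is_derive_Cmult (fun _ => g' p)); [apply is_derive_C_const|].
        apply (is_derive_Cmult (fun _ => - Ci)%C); [apply is_derive_C_const | apply is_derive_expi].
      * apply injective_projections; simpl; ring.
    + unfold expi. now rewrite cos_2PI, sin_2PI, cos_0, sin_0.
  - apply (RInt_C_derive_periodic (fun θ => (- Ci / r) * g (circle p r θ)))%C; auto.
    + intros θ.
      replace (g' (circle p r θ) * expi θ)%C
        with (0 * g (circle p r θ) + (- Ci / r) * (g' (circle p r θ) * (Ci * r * expi θ)))%C.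
      * apply (is_derive_Cmult (fun _ => - Ci / r)%C); [apply is_derive_C_const|].
        apply (is_derive_circle_angle_comp p g g' r θ Hg).
      * apply injective_projections; simpl; field; exact Hr.
    + now rewrite circle_2PI.
Qed.

Lemma circle_mean_value r :
  RInt_C (fun θ => g (circle p r θ)) 0 (2 * PI) = scal (2 * PI) (g p).
Proof.
  transitivity (RInt_C (fun θ => g (circle p 0 θ)) 0 (2 * PI)).
  - apply (is_derive_zero_const (fun u => RInt_C (fun θ => g (circle p u θ)) 0 (2 * PI))).
    intros u. pose proof (is_derive_RInt_circle u) as H.
    rewrite RInt_circle_derivative_zero in H. exact H.
  - rewrite (RInt_ext (V := C_R_CompleteNormedModule) _ (fun _ => g p))
      by (intros; now rewrite circle_0).
    rewrite RInt_const. f_equal. ring.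
Qed.

End MeanValue.

Definition fourier_mode (n : nat) (θ : R) : C := expi (- (INR n * θ)).

Lemma is_derive_fourier_mode n θ :
  is_derive (fourier_mode n) θ (- INR n * Ci * fourier_mode n θ)%C.
Proof.
  unfold fourier_mode. replace (- INR n * Ci * expi (- (INR n * θ)))%C
    with (scal (- INR n) (Ci * expi (- (INR n * θ)))%C).
  - apply (is_derive_comp (V := C_R_NormedModule) expi (fun t => - (INR n * t))).
    + apply is_derive_expi.
    + auto_derive; auto. ring.
  - match goal with |- ?a = ?b => change (@eq C a b) end.
    rewrite scal_R_Cmult. apply injective_projections; simpl; ring.
Qed.

Lemma continuous_fourier_mode n θ : continuous (fourier_mode n) θ.
Proof. exact (is_derive_continuous_C _ _ _ (is_derive_fourier_mode n θ)). Qed.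

Lemma expi_mul_fourier_mode_succ n θ : (expi θ * fourier_mode (S n) θ)%C = fourier_mode n θ.
Proof. unfold fourier_mode. rewrite expi_add, S_INR. f_equal. ring. Qed.

Lemma fourier_mode_0 θ : fourier_mode 0 θ = 1%C.
Proof. unfold fourier_mode. simpl. rewrite Rmult_0_l, Ropp_0. apply expi_0. Qed.

Lemma fourier_mode_2PI n : fourier_mode n (2 * PI) = fourier_mode n 0.
Proof.
  unfold fourier_mode, expi. rewrite Rmult_0_r, Ropp_0, cos_neg, sin_neg, cos_0, sin_0.
  replace (INR n * (2 * PI)) with (0 + 2 * INR n * PI) by ring.
  now rewrite cos_period, sin_period, cos_0, sin_0, Ropp_0.
Qed.

Lemma Ci_sq : (Ci * Ci = - 1)%C.
Proof. apply injective_projections; simpl; ring. Qed.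

Section CauchyEstimate.

Variable G : nat -> C -> C.
Hypothesis HG : forall k, has_C_derive (G k) (G (S k)).
Variables (p : C) (r : R).

Definition circle_coeff (k n : nat) : C :=
  RInt_C (fun θ => G k (circle p r θ) * fourier_mode n θ)%C 0 (2 * PI).

Lemma continuous_circle_coeff_integrand k n θ :
  continuous (fun θ => G k (circle p r θ) * fourier_mode n θ)%C θ.
Proof.
  apply (continuous_Cmult (fun θ => G k (circle p r θ)));
    [apply (continuous_circle_angle_comp p (G k) (G (S k)) r θ (HG k))
    |apply continuous_fourier_mode].
Qed.

Lemma is_derive_circle_coeff_primitive k n θ :
  is_derive (fun θ => - Ci * (G k (circle p r θ) * fourier_mode (S n) θ))%C θ
    (minus (scal r (G (S k) (circle p r θ) * fourier_mode n θ))
           (scal (INR (S n)) (G k (circle p r θ) * fourier_mode (S n) θ)))%C.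
Proof.
  rewrite <- (expi_mul_fourier_mode_succ n θ).
  match goal with |- is_derive _ _ ?l => replace l with
    (0 * (G k (circle p r θ) * fourier_mode (S n) θ) + - Ci *
      (G (S k) (circle p r θ) * (Ci * r * expi θ) * fourier_mode (S n) θ
       + G k (circle p r θ) * (- INR (S n) * Ci * fourier_mode (S n) θ)))%C end.
  - apply (is_derive_Cmult (fun _ => - Ci)%C); [apply is_derive_C_const|].
    apply (is_derive_Cmult (fun θ => G k (circle p r θ)) (fourier_mode (S n))).
    + apply (is_derive_circle_angle_comp p (G k) (G (S k)) r θ (HG k)).
    + apply is_derive_fourier_mode.
  - match goal with |- ?a = ?b => change (@eq C a b) end.
    change minus with Cminus. rewrite !scal_R_Cmult.
    transitivity (- (Ci * Ci) * (r * (G (S k) (circle p r θ) * (expi θ * fourier_mode (S n) θ))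
                                 - INR (S n) * (G k (circle p r θ) * fourier_mode (S n) θ)))%C.
    + ring.
    + rewrite Ci_sq. ring.
Qed.

Lemma circle_coeff_succ k n :
  scal (INR (S n)) (circle_coeff k (S n)) = scal r (circle_coeff (S k) n).
Proof.
  set (A := fun θ => (G (S k) (circle p r θ) * fourier_mode n θ)%C).
  set (B := fun θ => (G k (circle p r θ) * fourier_mode (S n) θ)%C).
  assert (HA : ex_RInt_C A 0 (2 * PI))
    by (apply ex_RInt_C_continuous, continuous_circle_coeff_integrand).
  assert (HB : ex_RInt_C B 0 (2 * PI))
    by (apply ex_RInt_C_continuous, continuous_circle_coeff_integrand).
  assert (Hint : RInt_C (fun θ => minus (scal r (A θ)) (scal (INR (S n)) (B θ))) 0 (2 * PI)
                 = minus (scal r (circle_coeff (S k) n)) (scal (INR (S n)) (circle_coeff k (S n)))).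
  { apply is_RInt_unique.
    apply (is_RInt_minus (V := C_R_NormedModule) (fun θ => scal r (A θ))
                         (fun θ => scal (INR (S n)) (B θ)));
      apply (is_RInt_scal (V := C_R_NormedModule));
      now apply (RInt_correct (V := C_R_CompleteNormedModule)). }
  rewrite (RInt_C_derive_periodic
             (fun θ => - Ci * (G k (circle p r θ) * fourier_mode (S n) θ))%C) in Hint.
  - apply injective_projections; [apply (f_equal fst) in Hint | apply (f_equal snd) in Hint];
      simpl in *; unfold scal, minus, plus, opp, mult in *; simpl in *; lra.
  - apply is_derive_circle_coeff_primitive.
  - intros θ.
    apply (continuous_minus (V := C_R_NormedModule));
      apply (continuous_scal_r (V := C_R_NormedModule)), continuous_circle_coeff_integrand.
  - now rewrite circle_2PI, fourier_mode_2PI.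
Qed.

Lemma circle_coeff_iter n : forall k,
  circle_coeff k n = scal (r ^ n / INR (fact n)) (circle_coeff (k + n) 0).
Proof.
  induction n as [|n IH]; intros k.
  - rewrite Nat.add_0_r. simpl. rewrite Rdiv_1_r. symmetry. apply (scal_one (V := C_R_ModuleSpace)).
  - pose proof (circle_coeff_succ k n) as H. rewrite IH, Nat.add_succ_comm in H.
    assert (Hn : 0 < INR (S n)) by (apply lt_0_INR; lia).
    rewrite fact_simpl, mult_INR. simpl pow.
    assert (Hf : 0 < INR (fact n)) by (apply lt_0_INR, lt_O_fact).
    revert H. generalize (circle_coeff k (S n)) (circle_coeff (k + S n) 0).
    set (m := INR (S n)) in *. set (f := INR (fact n)) in *. set (q := r ^ n) in *.
    intros [a1 a2] [b1 b2] H.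
    apply injective_projections; [apply (f_equal fst) in H | apply (f_equal snd) in H];
      simpl in *; unfold scal in *; simpl in *; repeat change (mult ?x ?y) with (x * y) in *;
      (apply (Rmult_eq_reg_l m); [rewrite H; field; lra | lra]).
Qed.

Lemma circle_coeff_0 k : circle_coeff k 0 = scal (2 * PI) (G k p).
Proof.
  unfold circle_coeff.
  rewrite (RInt_ext (V := C_R_CompleteNormedModule) _ (fun θ => G k (circle p r θ)))
    by (intros; now rewrite fourier_mode_0, Cmult_1_r).
  apply (circle_mean_value (G k) (G (S k)) (G (S (S k))) (HG k) (HG (S k))).
Qed.

Lemma Cmod_scal (a : R) (z : C) : Cmod (scal a z) = Rabs a * Cmod z.
Proof. rewrite scal_R_Cmult, Cmod_mult, Cmod_R. reflexivity. Qed.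

Lemma Cmod_circle_coeff_le n M :
  (forall θ, Cmod (G 0 (circle p r θ)) <= M) -> Cmod (circle_coeff 0 n) <= 2 * PI * M.
Proof.
  intros HM. rewrite <- norm_C_R.
  replace (2 * PI * M) with ((2 * PI - 0) * M) by ring.
  apply (norm_RInt_le_const (V := C_R_NormedModule)
           (fun θ => G 0%nat (circle p r θ) * fourier_mode n θ)%C).
  - pose proof PI_RGT_0. lra.
  - intros θ _. rewrite norm_C_R, Cmod_mult. unfold fourier_mode.
    rewrite Cmod_expi, Rmult_1_r. apply HM.
  - apply (RInt_correct (V := C_R_CompleteNormedModule)), ex_RInt_C_continuous.
    apply continuous_circle_coeff_integrand.
Qed.

Theorem Cauchy_estimate n M : 0 < r ->
  (forall θ, Cmod (G 0 (circle p r θ)) <= M) -> Cmod (G n p) <= INR (fact n) * M / r ^ n.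
Proof.
  intros Hr HM.
  pose proof (Cmod_circle_coeff_le n M HM) as Hc.
  rewrite circle_coeff_iter, Nat.add_0_l, circle_coeff_0, !Cmod_scal in Hc.
  assert (Hrn : 0 < r ^ n) by (apply pow_lt, Hr).
  assert (Hf : 0 < INR (fact n)) by (apply lt_0_INR, lt_O_fact).
  pose proof PI_RGT_0.
  rewrite !Rabs_pos_eq in Hc by (try apply Rlt_le, Rdiv_lt_0_compat; lra).
  apply (Rmult_le_reg_l (2 * PI * (r ^ n / INR (fact n)))).
  - apply Rmult_lt_0_compat; [lra | now apply Rdiv_lt_0_compat].
  - replace (2 * PI * (r ^ n / INR (fact n)) * (INR (fact n) * M / r ^ n)) with (2 * PI * M)
      by (field; lra).
    nra.
Qed.

End CauchyEstimate.

(** * The Logan function near the real axis *)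

Lemma sin_sq_le a : sin a ^ 2 <= a ^ 2.
Proof.
  destruct (MVT_abs sin cos 0 a) as [t [Ht _]]; [intros; apply derivable_pt_lim_sin|].
  rewrite sin_0, !Rminus_0_r in Ht.
  rewrite <- (pow2_abs (sin a)), <- (pow2_abs a). apply pow_incr. split; [apply Rabs_pos|].
  rewrite Ht. pose proof (Rabs_pos a). assert (Rabs (cos t) <= 1) by apply Rabs_le, COS_bound.
  nra.
Qed.

Lemma sinh_sq_le b : sinh b ^ 2 <= b ^ 2 * exp (2 * Rabs b).
Proof.
  set (t := Rabs b). assert (Ht : 0 <= t) by apply Rabs_pos.
  assert (Hsinh : sinh b ^ 2 = ((exp t - exp (- t)) / 2) ^ 2).
  { unfold t, sinh. destruct (Rle_dec 0 b).
    - now rewrite Rabs_pos_eq.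
    - rewrite Rabs_left, Ropp_involutive by lra. field. }
  assert (Hprod : exp t * exp (- t) = 1) by now rewrite <- exp_plus, Rplus_opp_r, exp_0.
  (* [1 - exp (-2t) <= 2t] gives [sinh t <= t exp t] *)
  assert (Hlow : 1 - 2 * t <= exp (- t) * exp (- t)).
  { rewrite <- exp_plus. pose proof (exp_ineq1_le (- t + - t)). lra. }
  assert (Hle1 : exp (- t) <= 1).
  { rewrite <- exp_0. destruct Ht as [Ht | <-].
    - left. apply exp_increasing. lra.
    - rewrite Ropp_0. lra. }
  pose proof (exp_pos t). pose proof (exp_pos (- t)).
  assert (Hbound : 0 <= (exp t - exp (- t)) / 2 <= t * exp t) by nra.
  rewrite Hsinh, <- (pow2_abs b). fold t.
  replace (exp (2 * t)) with (exp t ^ 2) by (simpl; rewrite Rmult_1_r, <- exp_plus; f_equal; ring).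
  rewrite <- Rpow_mult_distr. apply pow_incr. exact Hbound.
Qed.

(* The record [Cplx] of [Defs] and Coquelicot's [C] carry definitionally the same arithmetic;
   [toC] and [ofC] transport between them. *)
Definition toC (z : Cplx) : C := (re z, im z).
Definition ofC (w : C) : Cplx := mkC (fst w) (snd w).

Lemma Cabs_toC z : Cabs z = Cmod (toC z).
Proof. reflexivity. Qed.

Lemma is_Cderiv_has_C_derive (f f' : Cplx -> Cplx) :
  is_Cderiv f f' -> has_C_derive (fun w => toC (f (ofC w))) (fun w => toC (f' (ofC w))).
Proof.
  intros Hf w. split; [apply is_linear_Cmult_r|].
  intros x Hx eps.
  apply (is_filter_lim_locally_unique (K := R_AbsRing) (V := C_R_NormedModule)) in Hx. subst x.
  destruct (Hf (ofC w) eps (cond_pos eps)) as [d [Hd Hq]].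
  eapply filter_imp; [|exact (locally_ball_norm w (mkposreal d Hd))].
  intros y Hy. change (Cmod (y - w) < d) in Hy. rewrite !norm_C_R.
  change (minus y w) with (y - w)%C in *. change minus with Cminus.
  destruct (Ceq_dec (y - w) 0) as [Hyw | Hyw].
  { replace y with w by (apply (f_equal (fun z => z + w)%C) in Hyw; ring_simplify in Hyw; auto).
    replace (toC (f (ofC w)) - toC (f (ofC w)) - (w - w) * toC (f' (ofC w)))%C with (RtoC 0)
      by ring.
    rewrite Cmod_0. apply Rmult_le_pos; [apply Rlt_le, cond_pos | apply Cmod_ge_0]. }
  assert (Hh : ofC (y - w) <> Defs.RtoC 0).
  { intros E. apply Hyw. injection E; intros E2 E1.
    apply injective_projections; simpl; [exact E1 | exact E2]. }
  specialize (Hq (ofC (y - w)) Hh Hy).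
  replace (Cadd (ofC w) (ofC (y - w))) with (ofC y) in Hq
    by (unfold Cadd, ofC; simpl; f_equal; ring).
  change (Cmod ((toC (f (ofC y)) - toC (f (ofC w))) / (y - w) - toC (f' (ofC w)))%C < eps) in Hq.
  replace (toC (f (ofC y)) - toC (f (ofC w)) - (y - w) * toC (f' (ofC w)))%C
    with (((toC (f (ofC y)) - toC (f (ofC w))) / (y - w) - toC (f' (ofC w))) * (y - w))%C
    by (field; exact Hyw).
  rewrite Cmod_mult. apply Rmult_le_compat_r; [apply Cmod_ge_0 | lra].
Qed.

Lemma Cabs_Cdiv z w : toC w <> 0%C -> Cabs (Defs.Cdiv z w) = Cabs z / Cabs w.
Proof.
  intros Hw. rewrite !Cabs_toC.
  change (toC (Defs.Cdiv z w)) with (toC z / toC w)%C.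
  unfold Cdiv. rewrite Cmod_mult, Cmod_inv by exact Hw. reflexivity.
Qed.

Lemma Cabs_Csin_sq w : Cabs (Csin w) ^ 2 = sin (re w) ^ 2 + sinh (im w) ^ 2.
Proof.
  unfold Cabs, Csin; simpl re; simpl im.
  rewrite pow2_sqrt by nra.
  assert (Hcosh : cosh (im w) ^ 2 = 1 + sinh (im w) ^ 2).
  { unfold cosh, sinh.
    assert (exp (im w) * exp (- im w) = 1) by now rewrite <- exp_plus, Rplus_opp_r, exp_0.
    nra. }
  pose proof (sin2_cos2 (re w)) as Hsc. unfold Rsqr in Hsc. nra.
Qed.

Lemma Cabs_Csinc_le w : Cabs (Csinc w) <= exp (Rabs (im w)).
Proof.
  assert (He : 1 <= exp (Rabs (im w))).
  { pose proof (exp_ineq1_le (Rabs (im w))). pose proof (Rabs_pos (im w)). lra. }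
  assert (Hquot : toC w <> 0%C -> Cabs (Defs.Cdiv (Csin w) w) <= exp (Rabs (im w))).
  { intros Hw. rewrite Cabs_Cdiv by exact Hw.
    assert (Hpos : 0 < Cabs w) by (rewrite Cabs_toC; now apply Cmod_gt_0).
    apply Rle_div_l; [exact Hpos|].
    assert (Hw2 : Cabs w ^ 2 = re w ^ 2 + im w ^ 2) by (unfold Cabs; rewrite pow2_sqrt; nra).
    assert (Hexp : exp (Rabs (im w)) ^ 2 = exp (2 * Rabs (im w)))
      by (simpl; rewrite Rmult_1_r, <- exp_plus; f_equal; ring).
    pose proof (Cabs_Csin_sq w). pose proof (sin_sq_le (re w)). pose proof (sinh_sq_le (im w)).
    pose proof (Rabs_pos (im w)).
    assert (1 <= exp (2 * Rabs (im w))) by (pose proof (exp_ineq1_le (2 * Rabs (im w))); lra).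
    apply Rsqr_incr_0_var; [|apply Rmult_le_pos; lra].
    rewrite !Rsqr_pow2, Rpow_mult_distr, Hexp, Hw2. nra. }
  unfold Csinc.
  destruct (Req_EM_T (re w) 0) as [Hre | Hre]; [destruct (Req_EM_T (im w) 0) as [Him | Him]|].
  - unfold Cabs; simpl. rewrite <- sqrt_1 in He.
    now replace (1 * (1 * 1) + 0 * (0 * 1)) with 1 by ring.
  - apply Hquot. intros H. apply Him. exact (f_equal snd H).
  - apply Hquot. intros H. apply Hre. exact (f_equal fst H).
Qed.

Lemma Rabs_im_Csqrt u : Rabs (im (Csqrt u)) = sqrt ((Cabs u - re u) / 2).
Proof.
  unfold Csqrt; simpl im. rewrite Rabs_mult, (Rabs_pos_eq (sqrt _)) by apply sqrt_pos.
  destruct (Rlt_dec (im u) 0);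
    [replace (Rabs (-1)) with 1 by (rewrite Rabs_left; lra) | rewrite Rabs_R1]; ring.
Qed.

Lemma Cabs_sq_sub_le a b c d :
  0 < c -> 0 < d -> 100 * d < c -> c - d / 2 <= Rabs a -> Rabs b <= d ->
  Cabs (Csub (Cmul (mkC a b) (mkC a b)) (Defs.RtoC (c * c)))
    <= 48672 / 10000 * d * c + (a ^ 2 - b ^ 2 - c ^ 2).
Proof.
  intros Hc Hd Hcd Ha Hb.
  set (K := 48672 / 10000 * d * c). set (A := a ^ 2). set (B := b ^ 2).
  assert (HA : (c - d / 2) ^ 2 <= A) by (unfold A; rewrite <- (pow2_abs a); apply pow_incr; lra).
  assert (HB : B <= d ^ 2)
    by (unfold B; rewrite <- (pow2_abs b); apply pow_incr; pose proof (Rabs_pos b); lra).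
  assert (HB0 : 0 <= B) by apply pow2_ge_0.
  assert (Hsum : 0 <= K + (A - B - c ^ 2)) by (unfold K; nra).
  (* the defect is affine in [A] and [B]; its worst case [A = (c - d/2)^2], [B = d^2] is a
     quadratic form in [d, c] that is nonnegative once [100 d < c] *)
  assert (Hworst : 0 <= c ^ 2 * ((48672 / 10000) ^ 2 - 2 * (48672 / 10000) - 4)
                         + d * c * (4 - 3 / 2 * (48672 / 10000)) - d ^ 2) by nra.
  assert (Hkey : 4 * A * B <= K ^ 2 + 2 * K * (A - B - c ^ 2)).
  { assert (0 <= (A - (c - d / 2) ^ 2) * (2 * K - 4 * B))
      by (apply Rmult_le_pos; unfold K in *; nra).
    assert (0 <= (d ^ 2 - B) * (2 * K + 4 * (c - d / 2) ^ 2))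
      by (apply Rmult_le_pos; [lra | pose proof (pow2_ge_0 (c - d / 2)); unfold K; nra]).
    assert (0 <= d ^ 2 * (c ^ 2 * ((48672 / 10000) ^ 2 - 2 * (48672 / 10000) - 4)
                         + d * c * (4 - 3 / 2 * (48672 / 10000)) - d ^ 2))
      by (apply Rmult_le_pos; [apply pow2_ge_0 | exact Hworst]).
    unfold K in *. nra. }
  unfold Cabs; simpl re; simpl im.
  rewrite <- (sqrt_pow2 (K + (A - B - c ^ 2))) by exact Hsum.
  apply sqrt_le_1_alt. unfold A, B in *. nra.
Qed.

Lemma Rabs_im_Csqrt_sq_sub_le a b c d :
  0 < c -> 0 < d -> 100 * d < c -> c - d / 2 <= Rabs a -> Rabs b <= d ->
  Rabs (im (Csqrt (Csub (Cmul (mkC a b) (mkC a b)) (Defs.RtoC (c * c)))))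
    <= 156 / 100 * sqrt (d * c).
Proof.
  intros Hc Hd Hcd Ha Hb.
  pose proof (Cabs_sq_sub_le a b c d Hc Hd Hcd Ha Hb) as Habs.
  rewrite Rabs_im_Csqrt.
  replace (156 / 100 * sqrt (d * c)) with (sqrt ((156 / 100) ^ 2 * (d * c)))
    by (rewrite sqrt_mult_alt, sqrt_pow2 by (try apply pow2_ge_0; lra); reflexivity).
  apply sqrt_le_1_alt. simpl re in Habs |- *. lra.
Qed.

Lemma Cabs_logan_le c d x :
  0 < c -> 0 < d -> 100 * d < c -> c - d / 2 <= Rabs (re x) -> Rabs (im x) <= d ->
  Cabs (logan c x) <= c * exp (156 / 100 * sqrt (d * c)) / sinh c.
Proof.
  intros Hc Hd Hcd Ha Hb.
  assert (Hs : 0 < sinh c) by (rewrite <- sinh_0; now apply sinh_lt).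
  unfold logan. rewrite Cabs_toC.
  change (toC (Cmul (Defs.RtoC (c / sinh c)) ?w)) with (RtoC (c / sinh c) * toC w)%C.
  rewrite Cmod_mult, Cmod_R, Rabs_pos_eq, <- Cabs_toC by (apply Rlt_le, Rdiv_lt_0_compat; lra).
  replace (c * exp (156 / 100 * sqrt (d * c)) / sinh c)
    with (c / sinh c * exp (156 / 100 * sqrt (d * c))) by (field; lra).
  apply Rmult_le_compat_l; [apply Rlt_le, Rdiv_lt_0_compat; lra|].
  eapply Rle_trans; [apply Cabs_Csinc_le|].
  destruct x as [a b].
  destruct (Rle_lt_or_eq_dec _ _ (Rabs_im_Csqrt_sq_sub_le a b c d Hc Hd Hcd Ha Hb)) as [Hlt | ->].
  - left. now apply exp_increasing.
  - right. reflexivity.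
Qed.

Lemma Cabs_logan_eps_circle_le c eps delta z θ :
  0 < c -> 0 < eps -> eps <= delta -> delta < c / 100 ->
  c / eps <= Rabs (re z) -> Rabs (im z) <= 1 / 2 ->
  Cabs (logan_eps c eps (ofC (circle (toC z) (delta / (2 * eps)) θ)))
    <= c * exp (156 / 100 * sqrt (delta * c)) / sinh c.
Proof.
  intros Hc He Hed Hdc Hre Him.
  unfold logan_eps. apply Cabs_logan_le; [lra | lra | lra | |]; simpl.
  - match goal with |- _ <= Rabs ?e =>
      replace e with (eps * re z + delta / 2 * cos θ) by (field; lra) end.
    assert (Hcen : c <= Rabs (eps * re z)).
    { rewrite Rabs_mult, Rabs_pos_eq by lra.
      replace c with (eps * (c / eps)) at 1 by (field; lra). apply Rmult_le_compat_l; lra. }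
    assert (Hrad : Rabs (delta / 2 * cos θ) <= delta / 2).
    { rewrite Rabs_mult, Rabs_pos_eq by lra.
      assert (Rabs (cos θ) <= 1) by apply Rabs_le, COS_bound. nra. }
    pose proof (Rabs_triang_inv (eps * re z) (- (delta / 2 * cos θ))) as Htri.
    rewrite Rabs_Ropp in Htri. unfold Rminus in Htri. rewrite Ropp_involutive in Htri. lra.
  - match goal with |- Rabs ?e <= _ =>
      replace e with (eps * im z + delta / 2 * sin θ) by (field; lra) end.
    eapply Rle_trans; [apply Rabs_triang|].
    rewrite !Rabs_mult, (Rabs_pos_eq eps), (Rabs_pos_eq (delta / 2)) by lra.
    assert (Rabs (sin θ) <= 1) by apply Rabs_le, SIN_bound.
    nra.
Qed.

Theorem lemma4 (c eps delta : R) (z : Cplx) (n : nat) (F : nat -> Cplx -> Cplx) :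
  0 < c -> 0 < eps -> eps <= delta -> delta < c / 100 ->
  c / eps <= Rabs (re z) -> Rabs (im z) <= 1 / 2 ->
  (forall x, F 0%nat x = logan_eps c eps x) ->
  (forall k, is_Cderiv (F k) (F (S k))) ->
  Cabs (F n z) <=
    INR (fact n) * (c * exp (156 / 100 * sqrt (delta * c)) / sinh c)
    * (2 * eps / delta) ^ n.
Proof.
  intros Hc He Hed Hdc Hre Him HF0 HF.
  set (M := c * exp (156 / 100 * sqrt (delta * c)) / sinh c).
  set (r := delta / (2 * eps)).
  assert (Hr : 0 < r) by (unfold r; apply Rdiv_lt_0_compat; lra).
  pose proof (Cauchy_estimate (fun k w => toC (F k (ofC w)))
                (fun k => is_Cderiv_has_C_derive _ _ (HF k)) (toC z) r n M Hr) as HC.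
  cbv beta in HC. replace (ofC (toC z)) with z in HC by now destruct z.
  rewrite Cabs_toC. eapply Rle_trans.
  - apply HC. intros θ. rewrite <- Cabs_toC, HF0. now apply Cabs_logan_eps_circle_le.
  - right. replace (2 * eps / delta) with (/ r) by (unfold r; field; lra).
    rewrite pow_inv. unfold Rdiv. ring.
Qed.
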